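(* Let $\mathcal A=(\Sigma,Q_\mathcal A,I_\mathcal A,F_\mathcal A,\delta_\mathcal A)$ and $\mathcal B=(\Sigma,Q_\mathcal B,I_\mathcal B,F_\mathcal B,\delta_\mathcal B)$ be NBA, and let $\sqsubseteq$ be either backward direct simulation or backward direct trace inclusion, computed on the disjoint union of $\mathcal A$ and $\mathcal B$. If for every $p\in F_\mathcal A$ there exists $q\in F_\mathcal B$ with $p\sqsubseteq q$, then $\mathcal L(\mathcal A)\subseteq\mathcal L(\mathcal B)$.
   Context: An NBA is $(\Sigma,Q,I,F,\delta)$ with $\delta\subseteq Q\times\Sigma\times Q$, assumed forward and backward complete (every state has, for every symbol, at least one incoming and one outgoing transition with that symbol). Traces $q_0\xrightarrow{\sigma_0}q_1\cdots$ are initial if $q_0\in I$; infinite traces are fair if they visit $F$ infinitely often; $\mathcal L$ is the set of infinite words with an initial fair trace. Backward direct simulation $\sqsubseteq^{\mathrm{bw\text{-}di}}$: in a game from configuration $(p_0,q_0)$, at round $i$ from $(p_i,q_i)$ Spoiler picks a transition $p_{i+1}\xrightarrow{\sigma_i}p_i$, Duplicator answers with $q_{i+1}\xrightarrow{\sigma_i}q_i$; Duplicator wins the infinite play if for all $i$, $p_i\in F\Rightarrow q_i\in F$ and $p_i\in I\Rightarrow q_i\in I$; $p\sqsubseteq^{\mathrm{bw\text{-}di}}q$ iff Duplicator has a winning strategy from $(p,q)$. Backward direct trace inclusion: $p\subseteq^{\mathrm{bw\text{-}di}}q$ iff for every finite word $\sigma_0\cdots\sigma_{m-1}$ and every initial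 finite trace $p_0\xrightarrow{\sigma_0}\cdots\xrightarrow{\sigma_{m-1}}p_m=p$ there is an initial finite trace $q_0\xrightarrow{\sigma_0}\cdots\xrightarrow{\sigma_{m-1}}q_m=q$ with $p_i\in F\Rightarrow q_i\in F$ for all $0\le i\le m$. *)

From mathcomp Require Import all_boot.
Set Implicit Arguments. Unset Strict Implicit. Unset Printing Implicit Defensive.

Record nba (S : finType) := NBA {
  state : finType;
  init  : pred state;
  final : pred state;
  trans : state -> S -> state -> bool;
  fwd_complete : forall (p : state) (a : S), exists q, trans p a q;
  bwd_complete : forall (q : state) (a : S), exists p, trans p a q
}.

Section Generic.
Variables (S : finType) (Q : Type) (I F : pred Q) (d : Q -> S -> Q -> bool).

Definition is_trace (w : nat -> S) (r : nat -> Q) : Prop :=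
  forall i, d (r i) (w i) (r i.+1).
Definition fair (r : nat -> Q) : Prop :=
  forall n, exists m, n <= m /\ F (r m).
Definition accepts (w : nat -> S) : Prop :=
  exists r : nat -> Q, I (r 0) /\ is_trace w r /\ fair r.

(* A Duplicator strategy maps the history of Spoiler's choices
   [:: (ps 1, ws 0); ...; (ps (i+1), ws i)] to Duplicator's state q_(i+1). *)
Definition strategy := seq (Q * S) -> Q.

Definition spoiler_play (p0 : Q) (ps : nat -> Q) (ws : nat -> S) : Prop :=
  ps 0 = p0 /\ forall i, d (ps i.+1) (ws i) (ps i).

Definition history (ps : nat -> Q) (ws : nat -> S) (i : nat) : seq (Q * S) :=
  [seq (ps j.+1, ws j) | j <- iota 0 i.+1].

Definition dup_play (q0 : Q) (st : strategy) (ps : nat -> Q) (ws : nat -> S)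
  (i : nat) : Q :=
  match i with 0 => q0 | i'.+1 => st (history ps ws i') end.

Definition dup_wins (p0 q0 : Q) (st : strategy) : Prop :=
  forall ps ws, spoiler_play p0 ps ws ->
    let qs := dup_play q0 st ps ws in
    (forall i, d (qs i.+1) (ws i) (qs i)) /\
    (forall i, (F (ps i) -> F (qs i)) /\ (I (ps i) -> I (qs i))).

Definition bw_di_sim (p q : Q) : Prop := exists st : strategy, dup_wins p q st.

Definition bw_di_trinc (p q : Q) : Prop :=
  forall (m : nat) (w : nat -> S) (ps : nat -> Q),
    I (ps 0) -> (forall i, i < m -> d (ps i) (w i) (ps i.+1)) -> ps m = p ->
    exists qs : nat -> Q,
      [/\ I (qs 0), (forall i, i < m -> d (qs i) (w i) (qs i.+1)), qs m = q &
          forall i, i <= m -> F (ps i) -> F (qs i)].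
End Generic.

Definition lang (S : finType) (A : nba S) (w : nat -> S) : Prop :=
  accepts (@init S A) (@final S A) (@trans S A) w.

Section Union.
Variables (S : finType) (A B : nba S).
Definition U_state : finType := (state A + state B)%type.
Definition U_init (x : U_state) : bool :=
  match x with inl p => init p | inr q => init q end.
Definition U_final (x : U_state) : bool :=
  match x with inl p => final p | inr q => final q end.
Definition U_trans (x : U_state) (a : S) (y : U_state) : bool :=
  match x, y with
  | inl p, inl p' => trans p a p'
  | inr q, inr q' => trans q a q'
  | _, _ => false
  end.
End Union.

(* Fix an accepting run r of A on w.  Whenever r visits a final state p at
   time m, the hypothesis gives q with p below q, and unfolding backward
   simulation (which implies backward trace inclusion) along the finite trace
   r 0 ... r m yields an initial trace of B on w of length m that is final
   wherever r is final up to m.  Since r is final infinitely often, these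
   finite traces have unbounded length, and by Koenig's lemma (B has finitely
   many states) they converge to an infinite initial trace of B that is final
   whenever r is, hence fair. *)
From mathcomp Require Import all_boot zify.
From Stdlib Require Import Classical ClassicalEpsilon.
Set Implicit Arguments. Unset Strict Implicit. Unset Printing Implicit Defensive.

Section Konig.
Variables (Q : finType) (V : nat -> (nat -> Q) -> Prop).
Hypothesis V_unbounded : forall N, exists m t, N <= m /\ V m t.

Definition extendable (s : seq Q) : Prop :=
  forall N, exists m t, [/\ N <= m, V m t & mkseq t (size s) = s].

Lemma extendable_nil : extendable [::].
Proof. by move=> N; have [m [t [Nm Vt]]] := V_unbounded N; exists m, t. Qed.

Lemma extendable_rcons s : extendable s -> exists y, extendable (rcons s y).
Proof.
move=> ext_s; apply: NNPP => /(not_ex_all_not _ _) no_ext.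
have /fin_all_exists [bound boundP] : forall y, exists N, forall m t,
    N <= m -> V m t -> mkseq t (size s).+1 <> rcons s y.
  move=> y; have /not_all_ex_not [N HN] := no_ext y.
  by exists N => m t Nm Vt Et; apply: HN; exists m, t; rewrite size_rcons.
have [m [t [Nm Vt Et]]] := ext_s (\max_y bound y).
apply: (boundP (t (size s)) m t _ Vt); last by rewrite mkseqS Et.
exact: leq_trans (leq_bigmax (t (size s))) Nm.
Qed.

Lemma konig_limit : exists r : nat -> Q,
  forall n N, exists m t, [/\ N <= m, V m t & forall i, i < n -> t i = r i].
Proof.
have [q0 _] : exists q0 : Q, True.
  by have [m [t _]] := V_unbounded 0; exists (t 0).
pose next s := epsilon (inhabits q0) (fun y => extendable (rcons s y)).
pose fix prefix n :=
  if n is n'.+1 then rcons (prefix n') (next (prefix n')) else [::].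
have size_prefix n : size (prefix n) = n by elim: n => //= n IH; rewrite size_rcons IH.
have ext_prefix n : extendable (prefix n).
  elim: n => [|n IH]; first exact: extendable_nil.
  exact: epsilon_spec (extendable_rcons IH).
pose r i := nth q0 (prefix i.+1) i.
have prefixE n : mkseq r n = prefix n.
  elim: n => // n IH; rewrite mkseqS IH /r /=.
  by rewrite nth_rcons size_prefix ltnn eqxx.
exists r => n N; have [m [t [Nm Vt Et]]] := ext_prefix n N.
exists m, t; split=> // i lt_in.
by rewrite -(nth_mkseq q0 t lt_in) -(nth_mkseq q0 r lt_in) prefixE -Et size_prefix.
Qed.
End Konig.

Section BackwardSimulation.
Variables (S : finType) (Q : choiceType) (I F : pred Q) (d : Q -> S -> Q -> bool).
Hypothesis d_bwd_complete : forall (q : Q) (a : S), exists p, d p a q.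

Lemma spoiler_play_of_trace (m : nat) (w : nat -> S) (ps : nat -> Q) :
  (forall i, i < m -> d (ps i) (w i) (ps i.+1)) ->
  exists ps' ws, [/\ spoiler_play d (ps m) ps' ws,
    forall i, i <= m -> ps' (m - i) = ps i &
    forall i, i < m -> ws (m - i.+1) = w i].
Proof.
move=> Tps.
(* After reaching ps 0 Spoiler must keep playing; backward completeness lets
   him step back forever, reading the arbitrary letter w 0. *)
pose pred_of q a := xchoose (d_bwd_complete q a).
pose fix back k := if k is k'.+1 then pred_of (back k') (w 0) else ps 0.
exists (fun i => if i <= m then ps (m - i) else back (i - m)).
exists (fun i => if i < m then w (m - i.+1) else w 0).
split=> [|i im|i im].
- split=> [|i]; first by rewrite leq0n subn0.
  case: (ltngtP i m) => [im|mi|->] /=.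
  + by rewrite (_ : m - i = (m - i.+1).+1); [apply: Tps; lia | lia].
  + rewrite (_ : i.+1 - m = (i - m).+1); last by lia.
    exact: (xchooseP (d_bwd_complete _ (w 0))).
  + by rewrite subSnn subnn; exact: (xchooseP (d_bwd_complete (ps 0) (w 0))).
- by rewrite leq_subr; congr ps; lia.
- by rewrite ifT; [congr w; lia | lia].
Qed.

Lemma bw_di_sim_trinc (p q : Q) : bw_di_sim I F d p q -> bw_di_trinc I F d p q.
Proof.
move=> [st] + m w ps Ips Tps ps_m; rewrite -ps_m => win.
have [ps' [ws [play ps'E wsE]]] := spoiler_play_of_trace Tps.
have [Tqs FIqs] := win ps' ws play.
set qs := dup_play _ _ _ _ in Tqs FIqs.
exists (fun j => qs (m - j)); split.
- by have := (FIqs m).2; rewrite -{1}(subn0 m) ps'E // subn0; apply.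
- move=> i im; have := Tqs (m - i.+1).
  by rewrite wsE // (_ : (m - i.+1).+1 = m - i) //; lia.
- by rewrite subnn.
- by move=> i im Fpi; have := (FIqs (m - i)).1; rewrite ps'E //; apply.
Qed.
End BackwardSimulation.

Lemma accepts_of_prefix_traces (S Q : finType) (I F : pred Q)
    (d : Q -> S -> Q -> bool) (w : nat -> S) (mark : pred nat) :
  (forall n, exists m, n <= m /\ mark m) ->
  (forall m, mark m -> exists t : nat -> Q,
     [/\ I (t 0), forall i, i < m -> d (t i) (w i) (t i.+1) &
         forall i, i <= m -> mark i -> F (t i)]) ->
  accepts I F d w.
Proof.
move=> mark_inf lift.
pose V m t := mark m /\ [/\ I (t 0), forall i, i < m -> d (t i) (w i) (t i.+1) &
                           forall i, i <= m -> mark i -> F (t i)].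
have [|r r_lim] := @konig_limit Q V.
  move=> N; have [m [Nm Mm]] := mark_inf N; have [t Ht] := lift m Mm.
  by exists m, t.
exists r; split; last split.
- by have [m [t [_ [_ [It _ _]] <-]]] := r_lim 1 0.
- move=> i; have [m [t [im [_ [_ Tt _]] Et]]] := r_lim i.+2 i.+1.
  by rewrite -!Et //; apply: Tt.
- move=> n; have [m [nm Mm]] := mark_inf n.
  have [m' [t [mm' [_ [_ _ Ft]] Et]]] := r_lim m.+1 m.
  by exists m; split=> //; rewrite -Et // Ft.
Qed.

Section DisjointUnion.
Variables (S : finType) (A B : nba S).

Lemma U_bwd_complete (y : U_state A B) (a : S) : exists x, U_trans x a y.
Proof.
case: y => [p|q].
- by have [p' Tp] := bwd_complete p a; exists (inl p').
- by have [q' Tq] := bwd_complete q a; exists (inr q').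
Qed.

Lemma U_trace_inr (m : nat) (w : nat -> S) (qs : nat -> U_state A B) (q : state B) :
  (forall i, i < m -> U_trans (qs i) (w i) (qs i.+1)) -> qs m = inr q ->
  exists t : nat -> state B, forall i, i <= m -> qs i = inr (t i).
Proof.
move=> Tqs qs_m.
have inr_before k : k <= m -> exists b, qs (m - k) = inr b.
  elim: k => [|k IH] km; first by exists q; rewrite subn0.
  have [b qs_b] := IH (ltnW km).
  have := Tqs (m - k.+1) ltac:(lia).
  rewrite (_ : (m - k.+1).+1 = m - k) ?qs_b; last by lia.
  by case: (qs (m - k.+1)) => // b' _; exists b'.
exists (fun i => if qs i is inr b then b else q) => i im.
by have [b] := inr_before (m - i) (leq_subr i m); rewrite subKn // => ->.
Qed.

Lemma bw_di_trinc_lift (p : state A) (q : state B) (m : nat) (w : nat -> S)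
    (r : nat -> state A) :
  bw_di_trinc (@U_init S A B) (@U_final S A B) (@U_trans S A B) (inl p) (inr q) ->
  init (r 0) -> (forall i, i < m -> trans (r i) (w i) (r i.+1)) -> r m = p ->
  exists t : nat -> state B,
    [/\ init (t 0), forall i, i < m -> trans (t i) (w i) (t i.+1) &
        forall i, i <= m -> final (r i) -> final (t i)].
Proof.
move=> trinc Ir Tr r_m.
have [qs [Iqs Tqs qs_m Fqs]] :=
  trinc m w (fun i => inl (r i)) Ir Tr (congr1 inl r_m).
have [t qsE] := U_trace_inr Tqs qs_m.
exists t; split.
- by move: Iqs; rewrite qsE.
- by move=> i im; move: (Tqs i im); rewrite !qsE // ltnW.
- by move=> i im Fi; move: (Fqs i im Fi); rewrite qsE.
Qed.
End DisjointUnion.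

Theorem theorem4p2 (S : finType) (A B : nba S) :
  ((forall p : state A, final p ->
      exists q : state B, final q /\
        bw_di_sim (@U_init S A B) (@U_final S A B) (@U_trans S A B) (inl p) (inr q))
   \/
   (forall p : state A, final p ->
      exists q : state B, final q /\
        bw_di_trinc (@U_init S A B) (@U_final S A B) (@U_trans S A B) (inl p) (inr q))) ->
  forall w : nat -> S, lang A w -> lang B w.
Proof.
move=> below w [r [Ir [Tr Fr]]].
apply: (accepts_of_prefix_traces (mark := fun i => final (r i))) => // m Fm.
have [q trinc_q] : exists q : state B,
    bw_di_trinc (@U_init S A B) (@U_final S A B) (@U_trans S A B) (inl (r m)) (inr q).
  case: below => below; have [q [_ Hq]] := below _ Fm; exists q => //.
  exact: (bw_di_sim_trinc (@U_bwd_complete S A B) Hq).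
exact: bw_di_trinc_lift trinc_q Ir (fun i _ => Tr i) erefl.
Qed.
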